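(* Let $r \geq 5$ be odd and consider type $D_r$ realized in $\mathbb{R}^r$ with orthonormal basis $e_1,\dots,e_r$, simple roots $\alpha_i = e_i - e_{i+1}$ ($1\le i\le r-1$), $\alpha_r = e_{r-1}+e_r$. Let $C$ be the linear map with $C(e_1) = -e_r$, $C(e_i) = -e_i$ for $2 \le i \le r-1$, and $C(e_r) = e_1$. Then $C$ and $C^{-1}$ are rational elements of $W(D_r)$ and each has valency $1$ in the rationality graph $\Gamma(D_r)$: the only neighbor of $C$ is $s_{r-1}C$, and the only neighbor of $C^{-1}$ is $s_r C^{-1}$.
   Context: $W(D_r)$ is the Weyl group, generated by simple reflections $s_i$ ($s_i$ swaps $e_i, e_{i+1}$ for $i<r$; $s_r$ maps $e_{r-1}\mapsto -e_r$, $e_r \mapsto -e_{r-1}$). Positive roots $\Pi_+ = \{e_i \pm e_j : i<j\}$. $\alpha\le\beta$ iff $\beta-\alpha$ is a nonnegative integer combination of simple roots. For $A\subseteq\Pi_+$, $\mathrm{Adj}(A) = \{\alpha\in\Pi_+ : \exists\beta\in A,\ \alpha\le\beta\}$. For $u\in W$: $\nu^0(u) = u(\Pi_+)\cap\Pi_+$, $\nu^k(u) = u(\mathrm{Adj}\,\nu^{k-1}(u))\cap\Pi_+$; the sequence is descending and eventually constant with value $\nu(u)$; $u$ is rational iff $\nu(u)=\emptyset$. The rationality graph $\Gamma(D_r)$ has the rational elements as vertices, $u,v$ adjacent iff $u = s_i v$ for some $i$. *)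

(* Type D_r realized on column vectors 'cV[int]_r;
   Weyl group elements are r x r integer matrices acting by left
   multiplication. Indices of e_1..e_r and s_1..s_r / alpha_1..alpha_r are
   1-based naturals in the paper; e_k is the ordinal k-1 here. *)
From HB Require Import structures.
From mathcomp Require Import all_boot all_order all_algebra.
Set Implicit Arguments. Unset Strict Implicit. Unset Printing Implicit Defensive.
Import GRing.Theory Num.Theory.
Local Open Scope ring_scope.

Definition b2z (b : bool) : int := if b then 1 else 0.

Definition e (r : nat) (k : 'I_r) : 'cV[int]_r := \col_a b2z (a == k).

(* Simple roots alpha_i, 1-based i in 1..r:
   alpha_i = e_i - e_(i+1) for i < r, alpha_r = e_(r-1) + e_r. *)
Definition alpha (r : nat) (i : nat) : 'cV[int]_r :=
  \col_a (if (i < r)%N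
          then b2z (val a == i.-1) - b2z (val a == i)
          else b2z (val a == r.-2) + b2z (val a == r.-1)).

(* Simple reflections s_i (1-based i in 1..r), as matrices whose column b is
   the image of e_(b+1). For i<r: swaps e_i, e_(i+1); s_r: e_(r-1) |-> -e_r,
   e_r |-> -e_(r-1), other basis vectors fixed. *)
Definition srefl (r : nat) (i : nat) : 'M[int]_r :=
  \matrix_(a, b)
    (if (i < r)%N then
       (if val b == i.-1 then b2z (val a == i)
        else if val b == i then b2z (val a == i.-1)
        else b2z (a == b))
     else
       (if val b == r.-2 then - b2z (val a == r.-1)
        else if val b == r.-1 then - b2z (val a == r.-2)
        else b2z (a == b))).

(* W(D_r): the group generated by s_1, ..., s_r (finite, generators are
   involutions, so the generated monoid is the generated group). *)
Inductive in_W (r : nat) : 'M[int]_r -> Prop :=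
| W_one : in_W 1%:M
| W_step : forall (i : nat) (w : 'M[int]_r),
    (1 <= i <= r)%N -> in_W w -> in_W (srefl r i *m w).

Definition posroot (r : nat) (v : 'cV[int]_r) : Prop :=
  exists i j : 'I_r, (i < j)%N /\ (v = e i + e j \/ v = e i - e j).

Definition rle (r : nat) (a b : 'cV[int]_r) : Prop :=
  exists c : nat -> nat, b - a = \sum_(i < r) (alpha r i.+1) *+ c i.

Definition Adj (r : nat) (A : 'cV[int]_r -> Prop) : 'cV[int]_r -> Prop :=
  fun a => posroot a /\ exists b, A b /\ rle a b.

Fixpoint nu (r : nat) (u : 'M[int]_r) (k : nat) : 'cV[int]_r -> Prop :=
  match k with
  | 0 => fun v => posroot v /\ exists w, posroot w /\ u *m w = v
  | k'.+1 => fun v => posroot v /\ exists w, Adj (nu u k') w /\ u *m w = v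
  end.

(* u is rational iff the (descending, eventually constant) sequence nu^k(u)
   reaches the empty set. *)
Definition rational (r : nat) (u : 'M[int]_r) : Prop :=
  exists k, forall v, ~ nu u k v.

Definition vertex (r : nat) (u : 'M[int]_r) : Prop := in_W u /\ rational u.

Definition adjacent (r : nat) (u v : 'M[int]_r) : Prop :=
  exists i, (1 <= i <= r)%N /\ u = srefl r i *m v.

Definition Cmx (r : nat) : 'M[int]_r :=
  \matrix_(a, b)
    (if val b == 0%N then - b2z (val a == r.-1)
     else if val b == r.-1 then b2z (val a == 0%N)
     else - b2z (a == b)).

(* C and C^-1 are signed permutation matrices: C is the transposition
   e_1 <-> e_r followed by the negation of e_2, ..., e_r, and since r - 1 is
   even both factors are products of simple reflections.

   Rationality is certified by two linear forms W and V that are nonnegative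
   on the simple roots, hence monotone for the root order. If W <= 0 on
   nu^0(u), and every positive root x with W x <= 0 and u x positive has
   V x > 0 >= V (u x), then W and V are <= 0 on Adj nu^1(u), so nu^2(u) is
   empty. Conversely, a positive root a with u a positive and a <= u a stays in
   Adj nu^k(u) for every k, so u is not rational. All neighbours s_i C and
   s_i C^-1 are again signed permutations, and each one falls under one of
   these two criteria. *)
From mathcomp Require Import all_boot all_order all_algebra.
From mathcomp Require Import zify.
Set Implicit Arguments. Unset Strict Implicit. Unset Printing Implicit Defensive.
Import Order.TTheory GRing.Theory Num.Theory.
Local Open Scope ring_scope.

(* Split on every comparison of naturals in the goal, innermost first,
   discarding the branches that lia refutes. *)
Ltac no_if t := lazymatch t with context [if _ then _ else _] => fail | _ => idtac end.
Ltac case_cmp_step := match goal with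
 | H : context [if _ then _ else _] |- _ => move: H
 | |- context [(?a <= ?b)%N] =>
     no_if a; no_if b; case: (leqP a b) => /= ?; try (exfalso; lia)
 | |- context [?a == ?b] =>
     no_if a; no_if b; case: (a =P b) => /= ?; try subst; try (exfalso; lia)
 end.
Ltac case_cmp := rewrite ?/b2z /=; repeat case_cmp_step; intros; try lia.

Section SignedPerm.
Variable r : nat.

(* Unlike [e], indexed by a natural number; [ev n = 0] for [n >= r]. *)
Definition ev (n : nat) : 'cV[int]_r := \col_a b2z (val a == n).

Lemma e_ev (k : 'I_r) : e k = ev k.
Proof. by apply/colP => a; rewrite !mxE. Qed.

Lemma mul_ev (M : 'M[int]_r) (k : 'I_r) : M *m ev k = \col_a M a k.
Proof.
apply/colP => a; rewrite !mxE (bigD1 k) //= big1 ?addr0.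
  by rewrite mxE eqxx /= mulr1.
by move=> b /negbTE Hb; rewrite mxE val_eqE Hb /= mulr0.
Qed.

Definition signed_perm (M : 'M[int]_r) (P : nat -> nat) (S : nat -> int) :=
  forall n, (n < r)%N -> M *m ev n = S n *: ev (P n).

Lemma signed_perm_mul A B P1 S1 P2 S2 :
  signed_perm A P1 S1 -> signed_perm B P2 S2 ->
  (forall n, (n < r)%N -> (P2 n < r)%N) ->
  signed_perm (A *m B) (fun n => P1 (P2 n)) (fun n => S1 (P2 n) * S2 n).
Proof.
move=> HA HB HP n Hn; rewrite -mulmxA HB // -scalemxAr HA ?HP //.
by rewrite scalerA mulrC.
Qed.

Lemma eq_signed_perm M P S P' S' : signed_perm M P S ->
  (forall n, (n < r)%N -> P n = P' n /\ S n = S' n) -> signed_perm M P' S'.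
Proof. by move=> HM HPS n Hn; case: (HPS n Hn) => <- <-; apply: HM. Qed.

Lemma signed_perm_inj A B P S :
  signed_perm A P S -> signed_perm B P S -> A = B.
Proof.
move=> HA HB; apply/matrixP => a b.
have := congr1 (fun M : 'cV[int]_r => M a 0) (HA _ (ltn_ord b)).
have := congr1 (fun M : 'cV[int]_r => M a 0) (HB _ (ltn_ord b)).
by rewrite !(mul_ev _ b) !mxE => -> ->.
Qed.

Lemma signed_perm1 : signed_perm 1%:M id (fun _ => 1).
Proof. by move=> n Hn; rewrite mul1mx scale1r. Qed.

Lemma signed_permE (M : 'M[int]_r) (P : nat -> nat) (S : nat -> int) :
  (forall a b : 'I_r, M a b = S b * b2z (val a == P b)) -> signed_perm M P S.
Proof.
move=> HM n Hn; have -> : n = val (Ordinal Hn) by [].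
by rewrite mul_ev; apply/colP => a; rewrite !mxE HM.
Qed.

End SignedPerm.

Definition P_srefl (r i n : nat) : nat :=
  if (i < r)%N then (if n == i.-1 then i else if n == i then i.-1 else n)
  else (if n == r.-2 then r.-1 else if n == r.-1 then r.-2 else n).

Definition S_srefl (r i n : nat) : int :=
  if (i < r)%N then 1 else (if (n == r.-2) || (n == r.-1) then -1 else 1).

Lemma signed_perm_srefl r i : (1 <= i <= r)%N -> (2 <= r)%N ->
  signed_perm (srefl r i) (P_srefl r i) (S_srefl r i).
Proof.
move=> /andP[Hi1 Hir] Hr; apply: signed_permE => -[a Ha] [b Hb].
by rewrite mxE -val_eqE /P_srefl /S_srefl /=; case_cmp.
Qed.

Definition P_C (r n : nat) : nat :=
  if n == 0%N then r.-1 else if n == r.-1 then 0%N else n.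
Definition S_C (r n : nat) : int := if n == r.-1 then 1 else -1.
Definition S_Cinv (n : nat) : int := if n == 0%N then 1 else -1.

Lemma signed_perm_C r : (2 <= r)%N -> signed_perm (Cmx r) (P_C r) (S_C r).
Proof.
move=> Hr; apply: signed_permE => -[a Ha] [b Hb].
by rewrite mxE -val_eqE /P_C /S_C /=; case_cmp.
Qed.

Lemma invmx_right n (A B : 'M[int]_n) : A *m B = 1%:M -> invmx A = B.
Proof.
move=> AB1; have [Aunit _] := mulmx1_unit AB1.
by rewrite -[invmx A]mulmx1 -AB1 mulKmx.
Qed.

Section Weights.
Variable r : nat.
Implicit Types (W : nat -> int) (x y a b d v : 'cV[int]_r).

Definition lin W x : int := \sum_(a < r) W a * x a 0.

Lemma linD W x y : lin W (x + y) = lin W x + lin W y.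
Proof. by rewrite /lin -big_split; apply: eq_bigr => a _; rewrite mxE mulrDr. Qed.

Lemma linB W x y : lin W (x - y) = lin W x - lin W y.
Proof. by rewrite /lin -sumrB; apply: eq_bigr => a _; rewrite !mxE mulrBr. Qed.

Lemma linZ W c x : lin W (c *: x) = c * lin W x.
Proof. by rewrite /lin mulr_sumr; apply: eq_bigr => a _; rewrite mxE mulrCA. Qed.

Lemma linMn W x n : lin W (x *+ n) = lin W x *+ n.
Proof. by rewrite /lin -sumrMnl; apply: eq_bigr => a _; rewrite mulmxnE mulrnAr. Qed.

Lemma lin_sum W (F : 'I_r -> 'cV[int]_r) :
  lin W (\sum_(i < r) F i) = \sum_(i < r) lin W (F i).
Proof.
rewrite /lin exchange_big; apply: eq_bigr => a _.
by rewrite summxE mulr_sumr.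
Qed.

Lemma lin_ev W n : (n < r)%N -> lin W (ev r n) = W n.
Proof.
move=> Hn; rewrite /lin (bigD1 (Ordinal Hn)) //= big1 ?addr0.
  by rewrite mxE eqxx mulr1.
move=> b Hb; rewrite mxE; case: eqP => [E|]; last by rewrite mulr0.
by case/eqP: Hb; apply: val_inj.
Qed.

Lemma lin_ev2 W c1 c2 p1 p2 : (p1 < r)%N -> (p2 < r)%N ->
  lin W (c1 *: ev r p1 + c2 *: ev r p2) = c1 * W p1 + c2 * W p2.
Proof. by move=> H1 H2; rewrite linD !linZ !lin_ev. Qed.

Lemma alpha_ev k : alpha r k =
  if (k < r)%N then ev r k.-1 - ev r k else ev r r.-2 + ev r r.-1.
Proof. by apply/colP => a; case: ifP => H; rewrite !mxE H. Qed.

Lemma lin_alpha_ge0 W : (2 <= r)%N ->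
  (forall n, (n.+1 < r)%N -> W n.+1 <= W n) -> 0 <= W r.-2 + W r.-1 ->
  forall k, (k < r)%N -> 0 <= lin W (alpha r k.+1).
Proof.
move=> Hr Wdec Wlast k Hk; rewrite alpha_ev; case: ifP => Hkr.
  by rewrite linB !lin_ev ?subr_ge0 ?Wdec //; lia.
by rewrite linD !lin_ev //; lia.
Qed.

Lemma rle_refl a : rle a a.
Proof. by exists (fun _ => 0%N); rewrite subrr big1 // => i _; rewrite mulr0n. Qed.

Lemma rle_trans a b d : rle a b -> rle b d -> rle a d.
Proof.
move=> [c1 H1] [c2 H2]; exists (fun i => c2 i + c1 i)%N.
have -> : d - a = (d - b) + (b - a) by rewrite addrA subrK.
by rewrite H1 H2 -big_split; apply: eq_bigr => i _; rewrite mulrnDr.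
Qed.

Lemma rle_add_alpha a k : (1 <= k <= r)%N -> rle a (a + alpha r k).
Proof.
move=> /andP[Hk1 Hkr]; have Hk : (k.-1 < r)%N by lia.
exists (fun i : nat => nat_of_bool (i == k.-1)).
rewrite addrC addKr (bigD1 (Ordinal Hk)) //= eqxx mulr1n big1 ?addr0.
  by rewrite prednK.
move=> i Hi; case: eqP => [E|]; last by rewrite mulr0n.
by case/eqP: Hi; apply: val_inj.
Qed.

(* [e_x - e_y] is the sum of the simple roots alpha_(x+1), ..., alpha_y. *)
Lemma rle_add_ev_sub a (x y : nat) : (x <= y < r)%N -> rle a (a + (ev r x - ev r y)).
Proof.
move=> /andP[Hxy]; rewrite -(subnKC Hxy).
elim: (y - x)%N => [|d IH] Hd.
  by rewrite addn0 subrr addr0; apply: rle_refl.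
have -> : ev r x - ev r (x + d.+1) = (ev r x - ev r (x + d)) + alpha r (x + d).+1.
  rewrite alpha_ev ifT; last by lia.
  by rewrite /= addnS addrA subrK.
by rewrite addrA; apply: rle_trans (IH _) (rle_add_alpha _ _); lia.
Qed.

Lemma weight_rle W a b : (forall k, (k < r)%N -> 0 <= lin W (alpha r k.+1)) ->
  rle a b -> lin W a <= lin W b.
Proof.
move=> HW [c Hc]; rewrite -subr_ge0 -linB Hc lin_sum.
by apply: sumr_ge0 => i _; rewrite linMn mulrn_wge0 ?HW.
Qed.

Lemma posrootP v : posroot v -> exists i j (t : int),
  [/\ (i < j < r)%N, t = 1 \/ t = -1 & v = ev r i + t *: ev r j].
Proof.
case=> i [j [Hij [->|->]]]; exists i, j.
  by exists 1; rewrite !e_ev scale1r Hij ltn_ord; split => //; left.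
by exists (-1); rewrite !e_ev scaleN1r Hij ltn_ord; split => //; right.
Qed.

Lemma posroot_ev (t : int) i j : t = 1 \/ t = -1 -> (i < j < r)%N ->
  posroot (ev r i + t *: ev r j).
Proof.
move=> Ht /andP[Hij Hj]; have Hi : (i < r)%N by lia.
exists (Ordinal Hi), (Ordinal Hj); split => //; rewrite !e_ev /=.
by case: Ht => ->; [left; rewrite scale1r | right; rewrite scaleN1r].
Qed.

(* The leading basis vector of a positive root has coefficient 1. *)
Lemma posroot_ev2 (t1 t2 : int) p1 p2 : (p1 < r)%N -> (p2 < r)%N -> p1 <> p2 ->
  posroot (t1 *: ev r p1 + t2 *: ev r p2) ->
  ((p1 < p2)%N /\ t1 = 1) \/ ((p2 < p1)%N /\ t2 = 1).
Proof.
move=> H1 H2 Hne /posrootP [i [j [t [/andP[Hij Hj] Ht Heq]]]].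
have Hi : (i < r)%N by lia.
have E := fun a : 'I_r => congr1 (fun M : 'cV[int]_r => M a 0) Heq.
have := E (Ordinal Hi); have := E (Ordinal Hj); rewrite !mxE /=.
by case: Ht => ->; case_cmp.
Qed.

End Weights.

Lemma not_rational_of_rle r (u : 'M[int]_r) a :
  posroot a -> posroot (u *m a) -> rle a (u *m a) -> ~ rational u.
Proof.
move=> Ha Hua Hle [k Hk]; apply: (Hk (u *m a)).
elim: k {Hk} => [|k IH] /=; split => //; exists a; split => //.
by split => //; exists (u *m a).
Qed.

Lemma rational_of_weights r (u : 'M[int]_r) (W V : nat -> int) :
  (forall k, (k < r)%N -> 0 <= lin W (alpha r k.+1)) ->
  (forall k, (k < r)%N -> 0 <= lin V (alpha r k.+1)) ->
  (forall x, posroot x -> posroot (u *m x) -> lin W (u *m x) <= 0) ->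
  (forall x, posroot x -> posroot (u *m x) -> lin W x <= 0 ->
     0 < lin V x /\ lin V (u *m x) <= 0) ->
  rational u.
Proof.
move=> HW HV W_img V_img; exists 2%N => v /=.
move=> [Hv [w [[Hw [b [[Hb [w1 [[Hw1 [b1 [[Hb1 [w2 [Hw2 Hb1_def]]] Hw1b1]]] Hb_def]]]
  Hwb]]] Hv_def]]].
subst b1 b v.
have Ww1 : lin W w1 <= 0 by apply: le_trans (weight_rle HW Hw1b1) (W_img _ Hw2 Hb1).
have [_ Vb] := V_img _ Hw1 Hb Ww1.
have Ww : lin W w <= 0 by apply: le_trans (weight_rle HW Hwb) (W_img _ Hw1 Hb).
have [Vw_gt0 _] := V_img _ Hw Hv Ww.
by have := le_trans (weight_rle HV Hwb) Vb; rewrite leNgt Vw_gt0.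
Qed.

Section SignedPermRoots.
Variables (r : nat) (u : 'M[int]_r) (P : nat -> nat) (S : nat -> int).
Hypothesis u_PS : signed_perm u P S.
Hypothesis P_lt : forall n, (n < r)%N -> (P n < r)%N.
Hypothesis P_inj : forall n m, (n < r)%N -> (m < r)%N -> n <> m -> P n <> P m.

Lemma signed_perm_posroot x : posroot x -> posroot (u *m x) ->
  exists i j (t : int), [/\ (i < j < r)%N, t = 1 \/ t = -1, x = ev r i + t *: ev r j,
    u *m x = S i *: ev r (P i) + (t * S j) *: ev r (P j) &
    ((P i < P j)%N /\ S i = 1) \/ ((P j < P i)%N /\ t * S j = 1)].
Proof.
move=> /posrootP [i [j [t [Hij Ht ->]]]] Hux.
have [Hi Hj] : (i < r)%N /\ (j < r)%N by lia.
have ux : u *m (ev r i + t *: ev r j) = S i *: ev r (P i) + (t * S j) *: ev r (P j).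
  by rewrite mulmxDr -scalemxAr !u_PS // scalerA.
exists i, j, t; split => //.
apply: (@posroot_ev2 r); rewrite -?ux ?P_lt //.
by apply: P_inj => //; lia.
Qed.

Lemma rational_signed_perm (W V : nat -> int) :
  (forall k, (k < r)%N -> 0 <= lin W (alpha r k.+1)) ->
  (forall k, (k < r)%N -> 0 <= lin V (alpha r k.+1)) ->
  (forall i j (t : int), (i < j < r)%N -> t = 1 \/ t = -1 ->
     ((P i < P j)%N /\ S i = 1) \/ ((P j < P i)%N /\ t * S j = 1) ->
     S i * W (P i) + t * S j * W (P j) <= 0) ->
  (forall i j (t : int), (i < j < r)%N -> t = 1 \/ t = -1 ->
     ((P i < P j)%N /\ S i = 1) \/ ((P j < P i)%N /\ t * S j = 1) ->
     W i + t * W j <= 0 ->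
     0 < V i + t * V j /\ S i * V (P i) + t * S j * V (P j) <= 0) ->
  rational u.
Proof.
move=> HW HV W_img V_img; apply: (rational_of_weights HW HV).
  move=> x Hx Hux; have [i [j [t [Hij Ht -> -> Hpos]]]] := signed_perm_posroot Hx Hux.
  by rewrite lin_ev2 ?P_lt ?W_img //; lia.
move=> x Hx Hux; have [i [j [t [Hij Ht -> -> Hpos]]]] := signed_perm_posroot Hx Hux.
have [Hi Hj] : (i < r)%N /\ (j < r)%N by lia.
by rewrite -[ev r i]scale1r !lin_ev2 ?P_lt // !mul1r; apply: V_img.
Qed.

Lemma not_rational_signed_perm x y (t : int) b :
  (x < r)%N -> (y < r)%N -> posroot (ev r x + t *: ev r y) -> posroot b ->
  S x *: ev r (P x) + (t * S y) *: ev r (P y) = b ->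
  rle (ev r x + t *: ev r y) b -> ~ rational u.
Proof.
move=> Hx Hy Ha Hb ua; have Hua : u *m (ev r x + t *: ev r y) = b.
  by rewrite mulmxDr -scalemxAr !u_PS // scalerA.
by rewrite -Hua; apply: not_rational_of_rle; rewrite ?Hua.
Qed.

End SignedPermRoots.

Lemma in_W_mul r (A B : 'M[int]_r) : in_W A -> in_W B -> in_W (A *m B).
Proof.
move=> HA HB; elim: HA => [|i w Hi Hw IH]; first by rewrite mul1mx.
by rewrite -mulmxA; apply: W_step.
Qed.

Lemma in_W_srefl r i : (1 <= i <= r)%N -> in_W (srefl r i).
Proof. by move=> Hi; rewrite -[srefl r i]mulmx1; apply: W_step => //; apply: W_one. Qed.

Lemma in_W_conj_srefl r i (M : 'M[int]_r) :
  (1 <= i <= r)%N -> in_W M -> in_W (srefl r i *m M *m srefl r i).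
Proof. by move=> Hi HM; apply: in_W_mul (in_W_mul (in_W_srefl Hi) HM) (in_W_srefl Hi). Qed.

(* Induction downwards from j = r - 2: conjugation by s_(j+1) moves the index
   j+1 to j. *)
Lemma in_W_swap_last r j : (j.+1 < r)%N -> exists M : 'M[int]_r, in_W M /\
  signed_perm M (fun n => if n == j then r.-1 else if n == r.-1 then j else n)
    (fun _ => 1).
Proof.
move=> Hj; have [d] : exists d, (j + d).+2 = r by exists (r - j.+2)%N; lia.
elim: d j {Hj} => [|d IH] j Hjd.
  exists (srefl r r.-1); split; first by apply: in_W_srefl; lia.
  apply: eq_signed_perm (signed_perm_srefl _ _) _; try lia.
  by move=> n Hn; rewrite /P_srefl /S_srefl; split; case_cmp.
have [M [HM HMa]] := IH j.+1 ltac:(lia).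
exists (srefl r j.+1 *m M *m srefl r j.+1); split.
  by apply: in_W_conj_srefl; rewrite ?HM //; lia.
have Hs := @signed_perm_srefl r j.+1 ltac:(lia) ltac:(lia).
apply: eq_signed_perm (signed_perm_mul (signed_perm_mul Hs HMa _) Hs _) _.
- by move=> n Hn; case_cmp.
- by move=> n Hn; rewrite /P_srefl; case_cmp.
- by move=> n Hn; rewrite /P_srefl /S_srefl; split; case_cmp.
Qed.

Lemma in_W_negate_pair_last r j : (j.+1 < r)%N -> exists M : 'M[int]_r, in_W M /\
  signed_perm M id (fun n => if (n == j) || (n == r.-1) then -1 else 1).
Proof.
move=> Hj; have [d] : exists d, (j + d).+2 = r by exists (r - j.+2)%N; lia.
elim: d j {Hj} => [|d IH] j Hjd.
  exists (srefl r r.-1 *m srefl r r); split; first by apply: in_W_mul; apply: in_W_srefl; lia.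
  have H1 := @signed_perm_srefl r r.-1 ltac:(lia) ltac:(lia).
  have H2 := @signed_perm_srefl r r ltac:(lia) ltac:(lia).
  apply: eq_signed_perm (signed_perm_mul H1 H2 _) _.
  - by move=> n Hn; rewrite /P_srefl; case_cmp.
  - by move=> n Hn; rewrite /P_srefl /S_srefl; split; case_cmp.
have [M [HM HMa]] := IH j.+1 ltac:(lia).
exists (srefl r j.+1 *m M *m srefl r j.+1); split.
  by apply: in_W_conj_srefl; rewrite ?HM //; lia.
have Hs := @signed_perm_srefl r j.+1 ltac:(lia) ltac:(lia).
apply: eq_signed_perm (signed_perm_mul (signed_perm_mul Hs HMa _) Hs _) _.
- by move=> n Hn; case_cmp.
- by move=> n Hn; rewrite /P_srefl; case_cmp.
- by move=> n Hn; rewrite /P_srefl /S_srefl; split; case_cmp.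
Qed.

(* Negating m and r-1, then m+1 and r-1, negates the pair m, m+1. *)
Lemma in_W_negate_tail r k m : (m + k.*2).+2 = r -> exists M : 'M[int]_r, in_W M /\
  signed_perm M id (fun n => if (m <= n)%N then -1 else 1).
Proof.
elim: k m => [|k IH] m Hmk.
  have [M [HM HMa]] := @in_W_negate_pair_last r m ltac:(lia).
  by exists M; split => //; apply: eq_signed_perm HMa _ => n Hn; split => //; case_cmp.
have [M [HM HMa]] := IH m.+2 ltac:(lia).
have [N1 [HN1 HN1a]] := @in_W_negate_pair_last r m ltac:(lia).
have [N2 [HN2 HN2a]] := @in_W_negate_pair_last r m.+1 ltac:(lia).
exists (N1 *m N2 *m M); split; first by apply: in_W_mul => //; apply: in_W_mul.
apply: eq_signed_perm (signed_perm_mul (signed_perm_mul HN1a HN2a _) HMa _) _ => //.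
by move=> n Hn; split => //; case_cmp.
Qed.

Lemma in_W_Cmx r : (3 <= r)%N -> odd r -> exists Ci,
  [/\ in_W (Cmx r), in_W Ci, signed_perm Ci (P_C r) S_Cinv & Cmx r *m Ci = 1%:M].
Proof.
move=> Hr Hodd; have [k Hk] : exists k, (1 + k.*2).+2 = r.
  exists (r./2).-1; have := odd_double_half r; rewrite Hodd -!muln2; lia.
have [F [HF HFa]] := in_W_negate_tail Hk.
have [T [HT HTa]] := @in_W_swap_last r 0 ltac:(lia).
have HC : Cmx r = F *m T.
  apply: signed_perm_inj (signed_perm_C _) _; first lia.
  apply: eq_signed_perm (signed_perm_mul HFa HTa _) _.
  - by move=> n Hn; case_cmp.
  - by move=> n Hn; rewrite /P_C /S_C; split; case_cmp.
have HCi : signed_perm (T *m F) (P_C r) S_Cinv.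
  apply: eq_signed_perm (signed_perm_mul HTa HFa _) _ => //.
  by move=> n Hn; rewrite /P_C /S_Cinv; split; case_cmp.
exists (T *m F); split; [by rewrite HC; apply: in_W_mul | exact: in_W_mul | by [] |].
apply: (signed_perm_inj _ (@signed_perm1 r)).
apply: eq_signed_perm (signed_perm_mul (signed_perm_C _) HCi _) _; try lia.
- by move=> n Hn; rewrite /P_C; case_cmp.
- by move=> n Hn; rewrite /P_C /S_C /S_Cinv; split; case_cmp.
Qed.

Definition first_coord (n : nat) : int := b2z (n == 0%N).
Definition coord_sum (n : nat) : int := 1.
Definition coord_sum_neg_last (r n : nat) : int := 1 - 2 * b2z (n == r.-1).

Lemma first_coord_alpha r : (2 <= r)%N -> forall k, (k < r)%N ->
  0 <= lin first_coord (alpha r k.+1).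
Proof. by move=> Hr; apply: lin_alpha_ge0 => // [n Hn|]; rewrite /first_coord; case_cmp. Qed.

Lemma coord_sum_alpha r : (2 <= r)%N -> forall k, (k < r)%N ->
  0 <= lin coord_sum (alpha r k.+1).
Proof. by move=> Hr; apply: lin_alpha_ge0 => // [n Hn|]; rewrite /coord_sum. Qed.

Lemma coord_sum_neg_last_alpha r : (2 <= r)%N -> forall k, (k < r)%N ->
  0 <= lin (coord_sum_neg_last r) (alpha r k.+1).
Proof.
by move=> Hr; apply: lin_alpha_ge0 => // [n Hn|]; rewrite /coord_sum_neg_last; case_cmp.
Qed.

Lemma rational_Cmx r : (3 <= r)%N -> rational (Cmx r).
Proof.
move=> Hr; apply: (@rational_signed_perm r _ (P_C r) (S_C r) _ _ _ coord_sum first_coord).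
- by apply: signed_perm_C; lia.
- by move=> n Hn; rewrite /P_C; case_cmp.
- by move=> n m Hn Hm Hnm; rewrite /P_C; case_cmp.
- by apply: coord_sum_alpha; lia.
- by apply: first_coord_alpha; lia.
- by move=> i j t Hij [] ->; rewrite /P_C /S_C /coord_sum; case_cmp.
- by move=> i j t Hij [] ->; rewrite /P_C /S_C /coord_sum /first_coord; case_cmp.
Qed.

Lemma rational_Cinv r (Ci : 'M[int]_r) : (3 <= r)%N ->
  signed_perm Ci (P_C r) S_Cinv -> rational Ci.
Proof.
move=> Hr HCi; have Hr2 : (2 <= r)%N by lia.
apply: (rational_signed_perm HCi _ _ (coord_sum_neg_last_alpha Hr2) (first_coord_alpha Hr2)).
- by move=> n Hn; rewrite /P_C; case_cmp.
- by move=> n m Hn Hm Hnm; rewrite /P_C; case_cmp.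
- by move=> i j t Hij [] ->; rewrite /P_C /S_Cinv /coord_sum_neg_last; case_cmp.
- by move=> i j t Hij [] ->;
    rewrite /P_C /S_Cinv /coord_sum_neg_last /first_coord; case_cmp.
Qed.

Lemma rational_srefl_Cmx r : (3 <= r)%N -> rational (srefl r r.-1 *m Cmx r).
Proof.
move=> Hr; have Hr2 : (2 <= r)%N by lia.
have Hs := @signed_perm_srefl r r.-1 ltac:(lia) ltac:(lia).
have HC := @signed_perm_C r ltac:(lia).
have Hu := signed_perm_mul Hs HC (fun n Hn => ltac:(rewrite /P_C; case_cmp)).
apply: (rational_signed_perm Hu _ _ (coord_sum_alpha Hr2) (first_coord_alpha Hr2)).
- by move=> n Hn; rewrite /P_C /P_srefl; case_cmp.
- by move=> n m Hn Hm Hnm; rewrite /P_C /P_srefl; case_cmp.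
- by move=> i j t Hij [] ->; rewrite /P_C /S_C /P_srefl /S_srefl /coord_sum; case_cmp.
- by move=> i j t Hij [] ->;
    rewrite /P_C /S_C /P_srefl /S_srefl /coord_sum /first_coord; case_cmp.
Qed.

Lemma rational_srefl_Cinv r (Ci : 'M[int]_r) : (3 <= r)%N ->
  signed_perm Ci (P_C r) S_Cinv -> rational (srefl r r *m Ci).
Proof.
move=> Hr HCi; have Hr2 : (2 <= r)%N by lia.
have Hs := @signed_perm_srefl r r ltac:(lia) ltac:(lia).
have Hu := signed_perm_mul Hs HCi (fun n Hn => ltac:(rewrite /P_C; case_cmp)).
apply: (rational_signed_perm Hu _ _ (coord_sum_neg_last_alpha Hr2) (first_coord_alpha Hr2)).
- by move=> n Hn; rewrite /P_C /P_srefl; case_cmp.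
- by move=> n m Hn Hm Hnm; rewrite /P_C /P_srefl; case_cmp.
- by move=> i j t Hij [] ->;
    rewrite /P_C /S_Cinv /P_srefl /S_srefl /coord_sum_neg_last; case_cmp.
- by move=> i j t Hij [] ->;
    rewrite /P_C /S_Cinv /P_srefl /S_srefl /coord_sum_neg_last /first_coord; case_cmp.
Qed.

Ltac colE := apply/colP => z; rewrite !mxE; lia.

(* Witnesses a with a <= s_i C a: for 1 < i < r-1 the root e_i - e_(i+1) is
   fixed; otherwise a is the simple root moved by s_i. *)
Lemma not_rational_srefl_Cmx r i : (5 <= r)%N -> (1 <= i <= r)%N -> i <> r.-1 ->
  ~ rational (srefl r i *m Cmx r).
Proof.
move=> Hr /andP[Hi1 Hir] Hne.
have Hs := @signed_perm_srefl r i ltac:(lia) ltac:(lia).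
have Hu := signed_perm_mul Hs (@signed_perm_C r ltac:(lia))
  (fun n Hn => ltac:(rewrite /P_C; case_cmp)).
have [Hi2|Hi2] := leqP 2 i; last first.
  have Ei : i = 1%N by lia.
  subst i.
  apply: (not_rational_signed_perm (x := 0) (y := 1) (t := -1) (b := ev r 0 + (-1) *: ev r r.-1) Hu);
    try lia; try by apply: posroot_ev; lia.
  - by rewrite /P_srefl /P_C /S_srefl /S_C; case_cmp; colE.
  - have -> : ev r 0 + (-1) *: ev r r.-1 = ev r 0 + (-1) *: ev r 1 + (ev r 1 - ev r r.-1).
      by colE.
    by apply: rle_add_ev_sub; lia.
have [Hi3|Hi3] := leqP i r.-2.
  apply: (not_rational_signed_perm (x := i.-1) (y := i) (t := -1) (b := ev r i.-1 + (-1) *: ev r i) Hu);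
    try exact: rle_refl; try lia; try by apply: posroot_ev; lia.
  by rewrite /P_srefl /P_C /S_srefl /S_C; case_cmp; colE.
have Ei : i = r by lia.
subst i.
apply: (not_rational_signed_perm (x := r.-2) (y := r.-1) (t := 1) (b := ev r 0 + 1 *: ev r r.-1) Hu);
  try lia; try by apply: posroot_ev; lia.
- by rewrite /P_srefl /P_C /S_srefl /S_C; case_cmp; colE.
- have -> : ev r 0 + 1 *: ev r r.-1 = ev r r.-2 + 1 *: ev r r.-1 + (ev r 0 - ev r r.-2).
    by colE.
  by apply: rle_add_ev_sub; lia.
Qed.

Lemma not_rational_srefl_Cinv r i (Ci : 'M[int]_r) : (5 <= r)%N ->
  signed_perm Ci (P_C r) S_Cinv -> (1 <= i <= r)%N -> i <> r ->
  ~ rational (srefl r i *m Ci).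
Proof.
move=> Hr HCi /andP[Hi1 Hir] Hne.
have Hs := @signed_perm_srefl r i ltac:(lia) ltac:(lia).
have Hu := signed_perm_mul Hs HCi (fun n Hn => ltac:(rewrite /P_C; case_cmp)).
have [Hi2|Hi2] := leqP 2 i; last first.
  have Ei : i = 1%N by lia.
  subst i.
  apply: (not_rational_signed_perm (x := 0) (y := 1) (t := -1) (b := ev r 0 + 1 *: ev r r.-1) Hu);
    try lia; try by apply: posroot_ev; lia.
  - by rewrite /P_srefl /P_C /S_srefl /S_Cinv; case_cmp; colE.
  - have -> : ev r 0 + 1 *: ev r r.-1 =
        ev r 0 + (-1) *: ev r 1 + (ev r 1 - ev r r.-2) + alpha r r.
      by rewrite alpha_ev ltnn; colE.
    by apply: rle_trans (rle_add_ev_sub _ _) (rle_add_alpha _ _); lia.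
have [Hi3|Hi3] := leqP i r.-2.
  apply: (not_rational_signed_perm (x := i.-1) (y := i) (t := -1) (b := ev r i.-1 + (-1) *: ev r i) Hu);
    try exact: rle_refl; try lia; try by apply: posroot_ev; lia.
  by rewrite /P_srefl /P_C /S_srefl /S_Cinv; case_cmp; colE.
have Ei : i = r.-1 by lia.
subst i.
apply: (not_rational_signed_perm (x := r.-2) (y := r.-1) (t := -1) (b := ev r 0 + (-1) *: ev r r.-1) Hu);
  try lia; try by apply: posroot_ev; lia.
- by rewrite /P_srefl /P_C /S_srefl /S_Cinv; case_cmp; colE.
- have -> : ev r 0 + (-1) *: ev r r.-1 =
      ev r r.-2 + (-1) *: ev r r.-1 + (ev r 0 - ev r r.-2).
    by colE.
  by apply: rle_add_ev_sub; lia.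
Qed.

Theorem proposition4 (r : nat) (hr : (5 <= r)%N) (hodd : odd r) :
  vertex (Cmx r) /\ vertex (invmx (Cmx r)) /\
  (forall v : 'M[int]_r,
     (vertex v /\ adjacent v (Cmx r)) <-> v = srefl r r.-1 *m Cmx r) /\
  (forall v : 'M[int]_r,
     (vertex v /\ adjacent v (invmx (Cmx r))) <-> v = srefl r r *m invmx (Cmx r)).
Proof.
have hr3 : (3 <= r)%N by lia.
have [Ci [WC WCi HCi /invmx_right ->]] := in_W_Cmx hr3 hodd.
split; first by split; [|apply: rational_Cmx].
split; first by split; [|apply: rational_Cinv].
split => v; split.
- move=> [[_ Hrat] [i [Hi Hv]]]; subst v.
  by case: (i =P r.-1) => [-> //|Hne]; case: (not_rational_srefl_Cmx hr Hi Hne Hrat).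
- move=> ->; split; last by exists r.-1; split => //; lia.
  by split; [apply: W_step => //; lia | apply: rational_srefl_Cmx].
- move=> [[_ Hrat] [i [Hi Hv]]]; subst v.
  by case: (i =P r) => [-> //|Hne]; case: (not_rational_srefl_Cinv hr HCi Hi Hne Hrat).
- move=> ->; split; last by exists r; split => //; lia.
  by split; [apply: W_step => //; lia | apply: rational_srefl_Cinv].
Qed.
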